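(* If $\Gamma$ is a flat Type $\mathcal A$ connection, then $\Gamma$ is linearly equivalent to $\Gamma_i^0$ for some $0\le i\le5$, where $\Gamma_0^0=\Gamma(0,0,0,0,0,0)$, $\Gamma_1^0=\Gamma(1,0,0,1,0,0)$, $\Gamma_2^0=\Gamma(-1,0,0,0,0,1)$, $\Gamma_3^0=\Gamma(0,0,0,0,0,1)$, $\Gamma_4^0=\Gamma(0,0,0,0,1,0)$, $\Gamma_5^0=\Gamma(1,0,0,1,-1,0)$. Furthermore, $\Gamma_i^0$ is not linearly equivalent to $\Gamma_j^0$ for $i\ne j$.
   Context: A torsion-free connection on $\mathbb R^2$ has Christoffel symbols $\nabla_{\partial_{x^i}}\partial_{x^j}=\Gamma_{ij}^k\partial_{x^k}$. For real constants, $\Gamma(a,b,c,d,e,f)$ denotes the connection on $\mathbb R^2$ whose Christoffel symbols in the standard coordinates $(x^1,x^2)$ are the constants $\Gamma_{11}^1=a$, $\Gamma_{11}^2=b$, $\Gamma_{12}^1=\Gamma_{21}^1=c$, $\Gamma_{12}^2=\Gamma_{21}^2=d$, $\Gamma_{22}^1=e$, $\Gamma_{22}^2=f$; a Type $\mathcal A$ connection is one of this form. Flat means the curvature tensor vanishes. Two Type $\mathcal A$ connections are linearly equivalent if there is $T\in GL(2,\mathbb R)$ with $T^*\nabla_2=\nabla_1$ (they differ by a linear change of coordinates). *)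

From Stdlib Require Import Reals.
Open Scope R_scope.

Inductive idx := i1 | i2.

Definition sum2 (f : idx -> R) : R := f i1 + f i2.

Record TypeA := mkTypeA { ca : R; cb : R; cc : R; cd : R; ce : R; cf : R }.

(* Christoffel symbol Gamma_{ij}^k (torsion free: symmetric in i j). *)
Definition Gam (G : TypeA) (i j k : idx) : R :=
  match i, j, k with
  | i1, i1, i1 => ca G
  | i1, i1, i2 => cb G
  | i1, i2, i1 | i2, i1, i1 => cc G
  | i1, i2, i2 | i2, i1, i2 => cd G
  | i2, i2, i1 => ce G
  | i2, i2, i2 => cf G
  end.

(* Curvature component: R(d_i,d_j) d_k = curv i j k m d_m; since the
   Christoffel symbols are constant, derivative terms vanish:
   nabla_i nabla_j d_k - nabla_j nabla_i d_k. *)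
Definition curv (G : TypeA) (i j k m : idx) : R :=
  sum2 (fun l => Gam G j k l * Gam G i l m - Gam G i k l * Gam G j l m).

Definition flat (G : TypeA) : Prop := forall i j k m, curv G i j k m = 0.

(* A 2x2 real matrix T, T a i = entry in row a, column i (T e_i = sum_a T a i e_a). *)
Definition det2 (T : idx -> idx -> R) : R :=
  T i1 i1 * T i2 i2 - T i1 i2 * T i2 i1.

(* T^* nabla2 = nabla1 for the linear map T: for constant vector fields,
   (T^* nabla2)_u v = T^{-1} (nabla2_{Tu} Tv), i.e.
   T (Gamma1(e_i,e_j)) = Gamma2(T e_i, T e_j). *)
Definition lin_equiv (G1 G2 : TypeA) : Prop :=
  exists T : idx -> idx -> R, det2 T <> 0 /\
    forall i j l,
      sum2 (fun k => T l k * Gam G1 i j k) =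
      sum2 (fun a => sum2 (fun b => T a i * T b j * Gam G2 a b l)).

(* The normal forms Gamma_i^0, 0 <= i <= 5 (default for i > 5 irrelevant). *)
Definition Gamma0 (i : nat) : TypeA :=
  match i with
  | 0%nat => mkTypeA 0 0 0 0 0 0
  | 1%nat => mkTypeA 1 0 0 1 0 0
  | 2%nat => mkTypeA (-1) 0 0 0 0 1
  | 3%nat => mkTypeA 0 0 0 0 0 1
  | 4%nat => mkTypeA 0 0 0 0 1 0
  | 5%nat => mkTypeA 1 0 0 1 (-1) 0
  | _ => mkTypeA 0 0 0 0 0 0
  end.

(* A Type A connection is the commutative product x.y := nabla_x y on R^2; flatness is
   the identity x.(y.z) = y.(x.z), i.e. associativity, and a linear equivalence is an
   algebra isomorphism.  So the theorem classifies the two-dimensional commutative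
   associative real algebras.

   Let tr x be the trace of L_x := (x . _) and n <> 0 a vector with tr n = 0 (if tr is
   not identically 0).  Since L_n is traceless, L_n^2 = k id with k = - det L_n, and by
   associativity tr (n.n) = tr (L_n^2) = 2k.
   - k <> 0: u := n.n / k is an identity with n.n = k u, giving R x R (k > 0, Gamma_2)
     or C (k < 0, Gamma_5).
   - k = 0, tr <> 0: then n.n = 0 and m.n lies on R n, where m represents tr; the
     algebra is R[e]/(e^2) (Gamma_1) or R x {zero algebra} (Gamma_3) according as
     m.n <> 0 or m.n = 0.
   - tr = 0: the algebra is nilpotent, the zero algebra (Gamma_0) or the algebra
     spanned by x and x.x with x.x.x = 0 (Gamma_4). *)

From Stdlib Require Import Reals Lra Psatz Lia.
Open Scope R_scope.

(* [mul G x y] is nabla_x y for the constant vector fields x and y. *)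
Definition mul (G : TypeA) (x y : R * R) : R * R :=
  (fst x * fst y * ca G + (fst x * snd y + snd x * fst y) * cc G + snd x * snd y * ce G,
   fst x * fst y * cb G + (fst x * snd y + snd x * fst y) * cd G + snd x * snd y * cf G).

Definition scal (k : R) (x : R * R) : R * R := (k * fst x, k * snd x).

Definition comb (a : R) (x : R * R) (b : R) (y : R * R) : R * R :=
  (a * fst x + b * fst y, a * snd x + b * snd y).

Definition cross (x y : R * R) : R := fst x * snd y - snd x * fst y.

Lemma mul_comm G x y : mul G x y = mul G y x.
Proof. unfold mul; f_equal; ring. Qed.

Lemma mul_scal_l G k x y : mul G (scal k x) y = scal k (mul G x y).
Proof. unfold mul, scal; simpl; f_equal; ring. Qed.

Lemma mul_scal_r G k x y : mul G x (scal k y) = scal k (mul G x y).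
Proof. now rewrite mul_comm, mul_scal_l, mul_comm. Qed.

Lemma mul_comb_r G a x b y z : mul G z (comb a x b y) = comb a (mul G z x) b (mul G z y).
Proof. unfold mul, comb; simpl; f_equal; ring. Qed.

Lemma mul_comb_l G a x b y z : mul G (comb a x b y) z = comb a (mul G x z) b (mul G y z).
Proof. now rewrite mul_comm, mul_comb_r, !(mul_comm G z). Qed.

Lemma scal_scal a b x : scal a (scal b x) = scal (a * b) x.
Proof. unfold scal; simpl; f_equal; ring. Qed.

Lemma scal1 x : scal 1 x = x.
Proof. destruct x; unfold scal; simpl; f_equal; ring. Qed.

Lemma scal0 x : scal 0 x = (0, 0).
Proof. unfold scal; f_equal; ring. Qed.

Lemma comb0l x b y : comb 0 x b y = scal b y.
Proof. unfold comb, scal; f_equal; ring. Qed.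

Lemma cross_comb a b c d x y :
  cross (comb a x b y) (comb c x d y) = (a * d - b * c) * cross x y.
Proof. unfold cross, comb; simpl; ring. Qed.

Lemma cross_comb_l a x b y : cross (comb a x b y) y = a * cross x y.
Proof. unfold cross, comb; simpl; ring. Qed.

Lemma cross_scal_r k x y : cross x (scal k y) = k * cross x y.
Proof. unfold cross, scal; simpl; ring. Qed.

Lemma comb_coords u v x :
  cross u v <> 0 -> x = comb (cross x v / cross u v) u (cross u x / cross u v) v.
Proof.
  intro Huv; destruct u, v, x; unfold cross, comb in *; simpl in *.
  f_equal; field; exact Huv.
Qed.

Lemma lin_equiv_of_basis (G N : TypeA) (u v : R * R) :
  cross u v <> 0 ->
  mul G u u = comb (ca N) u (cb N) v ->
  mul G u v = comb (cc N) u (cd N) v ->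
  mul G v v = comb (ce N) u (cf N) v ->
  lin_equiv G N.
Proof.
  intros Huv Huu Hu_v Hvv.
  assert (coords : forall a b w, w = comb a u b v ->
            a = cross w v / cross u v /\ b = cross u w / cross u v).
  { intros a b w ->; unfold cross, comb; simpl; split; field; exact Huv. }
  destruct N as [a b c d e f]; simpl in *.
  destruct (coords _ _ _ Huu) as [-> ->], (coords _ _ _ Hu_v) as [-> ->],
    (coords _ _ _ Hvv) as [-> ->].
  clear coords Huu Hu_v Hvv.
  destruct u as [u1 u2], v as [v1 v2]; unfold cross in Huv; simpl in Huv.
  (* T is the inverse of the matrix with columns u, v. *)
  exists (fun p q => match p, q with
    | i1, i1 => v2 / (u1 * v2 - u2 * v1) | i1, i2 => - v1 / (u1 * v2 - u2 * v1)
    | i2, i1 => - u2 / (u1 * v2 - u2 * v1) | i2, i2 => u1 / (u1 * v2 - u2 * v1) end).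
  split.
  - unfold det2.
    replace (_ - _) with (/ (u1 * v2 - u2 * v1)) by (field; exact Huv).
    now apply Rinv_neq_0_compat.
  - intros i j l; destruct i, j, l; unfold sum2, mul, cross; simpl; field; exact Huv.
Qed.

Lemma lin_equiv_sym G1 G2 : lin_equiv G1 G2 -> lin_equiv G2 G1.
Proof.
  intros [T [HT H]].
  apply (lin_equiv_of_basis G2 G1 (T i1 i1, T i2 i1) (T i1 i2, T i2 i2)).
  - unfold cross, det2 in *; simpl; lra.
  - pose proof (H i1 i1 i1); pose proof (H i1 i1 i2).
    unfold mul, comb, sum2 in *; simpl in *; f_equal; lra.
  - pose proof (H i1 i2 i1); pose proof (H i1 i2 i2).
    unfold mul, comb, sum2 in *; simpl in *; f_equal; lra.
  - pose proof (H i2 i2 i1); pose proof (H i2 i2 i2).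
    unfold mul, comb, sum2 in *; simpl in *; f_equal; lra.
Qed.

Lemma mul_left_comm G x y z : flat G -> mul G x (mul G y z) = mul G y (mul G x z).
Proof.
  intro HG. destruct x as [x1 x2], y as [y1 y2], z as [z1 z2].
  unfold mul; simpl; f_equal; apply Rminus_diag_uniq.
  - transitivity ((x1 * y2 - x2 * y1) * (z1 * curv G i1 i2 i1 i1 + z2 * curv G i1 i2 i2 i1)).
    + unfold curv, sum2; simpl; ring.
    + rewrite !HG; ring.
  - transitivity ((x1 * y2 - x2 * y1) * (z1 * curv G i1 i2 i1 i2 + z2 * curv G i1 i2 i2 i2)).
    + unfold curv, sum2; simpl; ring.
    + rewrite !HG; ring.
Qed.

Lemma mul_assoc G x y z : flat G -> mul G (mul G x y) z = mul G x (mul G y z).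
Proof. intro HG. now rewrite mul_comm, (mul_left_comm _ _ _ _ HG), (mul_comm G z). Qed.

Definition trace (G : TypeA) (x : R * R) : R :=
  fst (mul G x (1, 0)) + snd (mul G x (0, 1)).

Definition ldet (G : TypeA) (x : R * R) : R :=
  cross (mul G x (1, 0)) (mul G x (0, 1)).

(* [trace G x] is the scalar product of x with [trace_vec G]; [trace_null G] is that
   vector turned by a right angle, so it spans the kernel of [trace G] when nonzero. *)
Definition trace_vec (G : TypeA) : R * R := (ca G + cd G, cc G + cf G).

Definition trace_null (G : TypeA) : R * R := (cc G + cf G, - (ca G + cd G)).

Lemma trace_scal G k x : trace G (scal k x) = k * trace G x.
Proof. unfold trace, mul, scal; simpl; ring. Qed.

Lemma cross_trace_null G x : cross x (trace_null G) = - trace G x.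
Proof. unfold cross, trace, trace_null, mul; simpl; ring. Qed.

Lemma trace_in_basis G x u v :
  trace G x * cross u v = cross (mul G x u) v + cross u (mul G x v).
Proof. unfold trace, cross, mul; simpl; ring. Qed.

Lemma trace_vec_eq0 G : trace G (trace_vec G) = 0 -> trace_vec G = (0, 0).
Proof.
  intro Htr.
  assert (Hsq : (ca G + cd G)² + (cc G + cf G)² = 0)
    by (rewrite <- Htr; unfold trace, trace_vec, mul, Rsqr; simpl; ring).
  apply Rplus_sqr_eq_0 in Hsq as [H1 H2]; unfold trace_vec; now rewrite H1, H2.
Qed.

(* Cayley-Hamilton for the traceless map L_n. *)
Lemma mul_trace_null_twice G x :
  mul G (trace_null G) (mul G (trace_null G) x) = scal (- ldet G (trace_null G)) x.
Proof. unfold mul, trace_null, scal, ldet, cross; simpl; f_equal; ring. Qed.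

Lemma trace_trace_null_sq G :
  flat G -> trace G (mul G (trace_null G) (trace_null G)) = - 2 * ldet G (trace_null G).
Proof.
  intro HG. unfold trace at 1.
  rewrite !(mul_assoc _ _ _ _ HG), !mul_trace_null_twice. unfold scal; simpl; ring.
Qed.

Ltac expand_products u v Huu Huv Hvv :=
  rewrite mul_comb_l, !mul_comb_r, (mul_comm _ v u), Huu, Huv, Hvv;
  destruct u, v; unfold comb, scal; simpl; f_equal; field.

Lemma lin_equiv_Gamma1_basis G u n A B :
  A <> 0 -> cross u n <> 0 -> mul G u u = comb A u B n -> mul G u n = scal A n ->
  mul G n n = (0, 0) -> lin_equiv G (Gamma0 1).
Proof.
  intros HA Hun Huu Hu_n Hnn.
  apply (lin_equiv_of_basis G _ (comb (/ A) u (- B / (A * A)) n) (comb 0 u 1 n)).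
  { rewrite cross_comb. apply Rmult_integral_contrapositive_currified; [|exact Hun].
    replace (_ - _) with (/ A) by ring.
    now apply Rinv_neq_0_compat. }
  all: expand_products u n Huu Hu_n Hnn; exact HA.
Qed.

Lemma lin_equiv_Gamma2_basis G u n r :
  0 < r -> cross u n <> 0 -> mul G u u = u -> mul G u n = n ->
  mul G n n = scal (r * r) u -> lin_equiv G (Gamma0 2).
Proof.
  intros Hr Hun Huu Hu_n Hnn.
  apply (lin_equiv_of_basis G _ (comb (-1/2) u (/ (2 * r)) n) (comb (1/2) u (/ (2 * r)) n)).
  { rewrite cross_comb. apply Rmult_integral_contrapositive_currified; [|exact Hun].
    replace (_ - _) with (- / (2 * r)) by (field; lra).
    apply Ropp_neq_0_compat, Rinv_neq_0_compat; lra. }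
  all: expand_products u n Huu Hu_n Hnn; lra.
Qed.

Lemma lin_equiv_Gamma3_basis G u n A B :
  A <> 0 -> cross u n <> 0 -> mul G u u = comb A u B n -> mul G u n = (0, 0) ->
  mul G n n = (0, 0) -> lin_equiv G (Gamma0 3).
Proof.
  intros HA Hun Huu Hu_n Hnn.
  apply (lin_equiv_of_basis G _ (comb 0 u 1 n) (comb (/ A) u (B / (A * A)) n)).
  { rewrite cross_comb. apply Rmult_integral_contrapositive_currified; [|exact Hun].
    replace (_ - _) with (- / A) by ring.
    now apply Ropp_neq_0_compat, Rinv_neq_0_compat. }
  all: expand_products u n Huu Hu_n Hnn; exact HA.
Qed.

Lemma lin_equiv_Gamma5_basis G u n r :
  0 < r -> cross u n <> 0 -> mul G u u = u -> mul G u n = n ->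
  mul G n n = scal (- (r * r)) u -> lin_equiv G (Gamma0 5).
Proof.
  intros Hr Hun Huu Hu_n Hnn.
  apply (lin_equiv_of_basis G _ (comb 1 u 0 n) (comb 0 u (/ r) n)).
  { rewrite cross_comb. apply Rmult_integral_contrapositive_currified; [|exact Hun].
    replace (_ - _) with (/ r) by ring.
    apply Rinv_neq_0_compat; lra. }
  all: expand_products u n Huu Hu_n Hnn; lra.
Qed.

Lemma lin_equiv_Gamma2_or_Gamma5 G : flat G -> ldet G (trace_null G) <> 0 ->
  lin_equiv G (Gamma0 2) \/ lin_equiv G (Gamma0 5).
Proof.
  intros HG Hdet.
  set (n := trace_null G) in *. set (k := - ldet G n).
  assert (Hk : k <> 0) by (apply Ropp_neq_0_compat; exact Hdet).
  assert (Hn2 : forall x, mul G n (mul G n x) = scal k x)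
    by (intro; apply mul_trace_null_twice).
  set (u := scal (/ k) (mul G n n)).
  assert (Huu : mul G u u = u).
  { unfold u; rewrite mul_scal_l, mul_scal_r, (mul_assoc _ _ _ _ HG), Hn2, !scal_scal.
    now replace (/ k * / k * k) with (/ k) by (field; exact Hk). }
  assert (Hun : mul G u n = n).
  { unfold u; rewrite mul_scal_l, mul_comm, Hn2, scal_scal.
    replace (/ k * k) with 1 by (field; exact Hk); apply scal1. }
  assert (Hnn : mul G n n = scal k u).
  { unfold u; rewrite scal_scal. replace (k * / k) with 1 by (field; exact Hk).
    symmetry; apply scal1. }
  assert (Hcross : cross u n = -2).
  { unfold u, n; rewrite cross_trace_null, trace_scal, (trace_trace_null_sq _ HG).
    fold n; unfold k; field; exact Hdet. }
  destruct (Rlt_or_le 0 k) as [Hpos | Hneg].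
  - left. apply (lin_equiv_Gamma2_basis G u n (sqrt k)); auto.
    + now apply sqrt_lt_R0.
    + lra.
    + now rewrite sqrt_sqrt by lra.
  - right. apply (lin_equiv_Gamma5_basis G u n (sqrt (- k))); auto.
    + apply sqrt_lt_R0; lra.
    + lra.
    + now rewrite sqrt_sqrt, Ropp_involutive by lra.
Qed.

Section NullTraceCase.

Variable G : TypeA.
Hypothesis HG : flat G.
Hypothesis Hdet : ldet G (trace_null G) = 0.
Hypothesis Htr : trace G (trace_vec G) <> 0.

Let m := trace_vec G.
Let n := trace_null G.

Lemma cross_trace_vec_null : cross m n <> 0.
Proof. unfold n; rewrite cross_trace_null; now apply Ropp_neq_0_compat. Qed.

Lemma trace_null_sq_eq0 : mul G n n = (0, 0).
Proof.
  pose proof cross_trace_vec_null as Hmn.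
  assert (Hpar : cross (mul G n n) n = 0).
  { unfold n; rewrite cross_trace_null, (trace_trace_null_sq _ HG), Hdet; ring. }
  set (b := cross m (mul G n n) / cross m n).
  assert (Hnn : mul G n n = scal b n).
  { rewrite (comb_coords m n (mul G n n)) at 1 by exact Hmn.
    rewrite Hpar, Rdiv_0_l; apply comb0l. }
  assert (Hb : b * b * cross m n = 0).
  { pose proof (mul_trace_null_twice G n) as Hn3.
    rewrite Hdet, Ropp_0, scal0 in Hn3; fold n in Hn3.
    rewrite Hnn, mul_scal_r, Hnn, scal_scal in Hn3.
    apply (f_equal (cross m)) in Hn3.
    rewrite cross_scal_r in Hn3; rewrite Hn3; unfold cross; simpl; ring. }
  assert (Hb0 : b = 0).
  { apply Rmult_integral in Hb as [Hb | Hb]; [|contradiction].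
    now apply Rmult_integral in Hb as [Hb | Hb]. }
  now rewrite Hnn, Hb0, scal0.
Qed.

Lemma mul_trace_vec_null_parallel : exists l, mul G m n = scal l n.
Proof.
  pose proof cross_trace_vec_null as Hmn.
  set (a := cross (mul G m n) n / cross m n).
  set (l := cross m (mul G m n) / cross m n).
  assert (Hc : mul G m n = comb a m l n) by (now apply comb_coords).
  assert (H0 : mul G n (comb a m l n) = (0, 0)).
  { rewrite <- Hc, (mul_left_comm _ _ _ _ HG), trace_null_sq_eq0.
    unfold mul; simpl; f_equal; ring. }
  rewrite mul_comb_r, (mul_comm G n m), Hc, trace_null_sq_eq0 in H0.
  assert (Ha : a * a * cross m n = 0).
  { transitivity (cross (comb a (comb a m l n) l (0, 0)) n).
    - unfold cross, comb; simpl; ring.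
    - rewrite H0; unfold cross; simpl; ring. }
  assert (Ha0 : a = 0).
  { apply Rmult_integral in Ha as [Ha | Ha]; [|contradiction].
    now apply Rmult_integral in Ha as [Ha | Ha]. }
  exists l. now rewrite Hc, Ha0, comb0l.
Qed.

Lemma lin_equiv_Gamma1_or_Gamma3 : lin_equiv G (Gamma0 1) \/ lin_equiv G (Gamma0 3).
Proof.
  pose proof cross_trace_vec_null as Hmn.
  destruct mul_trace_vec_null_parallel as [l Hm_n].
  set (A := cross (mul G m m) n / cross m n).
  set (B := cross m (mul G m m) / cross m n).
  assert (Hmm : mul G m m = comb A m B n) by (now apply comb_coords).
  assert (Hsum : A + l = trace G m).
  { apply (Rmult_eq_reg_r (cross m n)); [|exact Hmn].
    rewrite (trace_in_basis G m m n), Hmm, Hm_n, cross_comb_l, cross_scal_r; ring. }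
  assert (Hl : l * (l - A) * cross m n = 0).
  { pose proof (mul_left_comm G n m m HG) as E.
    rewrite Hmm, mul_comb_r, (mul_comm G n m), Hm_n, trace_null_sq_eq0, mul_scal_r, Hm_n,
      scal_scal in E.
    apply (f_equal (cross m)) in E.
    rewrite cross_scal_r in E.
    transitivity (l * l * cross m n - A * l * cross m n); [ring|].
    rewrite <- E; unfold cross, comb, scal; simpl; ring. }
  apply Rmult_integral in Hl as [Hl | Hl]; [|contradiction].
  apply Rmult_integral in Hl as [Hl0 | HlA].
  - right. apply (lin_equiv_Gamma3_basis G m n A B); auto.
    + fold m in Htr; lra.
    + now rewrite Hm_n, Hl0, scal0.
    + exact trace_null_sq_eq0.
  - left. apply (lin_equiv_Gamma1_basis G m n A B); auto.
    + fold m in Htr; lra.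
    + now replace A with l by lra.
    + exact trace_null_sq_eq0.
Qed.

End NullTraceCase.

Lemma lin_equiv_Gamma0_or_Gamma4 G : flat G -> trace_vec G = (0, 0) ->
  lin_equiv G (Gamma0 0) \/ lin_equiv G (Gamma0 4).
Proof.
  intros HG Htr.
  pose proof (HG i1 i2 i1 i1) as F1; pose proof (HG i1 i2 i1 i2) as F2;
  pose proof (HG i1 i2 i2 i1) as F3; pose proof (HG i1 i2 i2 i2) as F4.
  destruct G as [a b c d e f]; unfold trace_vec, curv, sum2 in *; simpl in *.
  injection Htr as Had Hcf.
  replace d with (- a) in * by lra. replace f with (- c) in * by lra.
  assert (E1 : a * a + b * c = 0) by lra.
  assert (E2 : a * e = c * c) by lra.
  assert (E3 : b * e = - (a * c)) by lra.
  destruct (Req_dec b 0) as [Hb | Hb].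
  - subst b. assert (a = 0) by nra. subst a. assert (c = 0) by nra. subst c.
    destruct (Req_dec e 0) as [He | He].
    + subst e. left.
      apply (lin_equiv_of_basis _ _ (1, 0) (0, 1)); unfold cross, mul, comb; simpl;
        try (f_equal; ring); lra.
    + right.
      apply (lin_equiv_of_basis _ _ (e, 0) (0, 1)); unfold cross, mul, comb; simpl;
        try (f_equal; ring); intro; apply He; lra.
  - right.
    assert (Hc : c = - (a * a) / b) by (replace (- (a * a)) with (b * c) by lra; field; auto).
    assert (He : e = a * a * a / (b * b)).
    { apply (Rmult_eq_reg_l b); auto. rewrite E3, Hc. field. auto. }
    subst c e.
    apply (lin_equiv_of_basis _ _ (a, b) (1, 0)); unfold cross, mul, comb; simpl;
      try (f_equal; field; auto). intro; apply Hb; lra.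
Qed.

(* In every case the coefficient equations force entries of T to vanish one after the
   other until det T = 0. *)
Lemma Gamma0_inequiv_lt i j : (i < j <= 5)%nat -> ~ lin_equiv (Gamma0 i) (Gamma0 j).
Proof.
  intros Hij [T [HT H]].
  pose proof (H i1 i1 i1); pose proof (H i1 i1 i2); pose proof (H i1 i2 i1);
  pose proof (H i1 i2 i2); pose proof (H i2 i2 i1); pose proof (H i2 i2 i2).
  clear H. unfold det2, sum2 in *.
  set (p := T i1 i1) in *; set (q := T i1 i2) in *;
  set (r := T i2 i1) in *; set (s := T i2 i2) in *; clearbody p q r s; clear T.
  destruct i as [|[|[|[|[|[|]]]]]], j as [|[|[|[|[|[|]]]]]]; try lia; simpl in *.
  all: repeat match goal with v : R |- _ => assert (v = 0) by nra; subst v end;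
    apply HT; ring.
Qed.

Theorem theorem3p2 :
  (forall G : TypeA, flat G ->
     exists i : nat, (i <= 5)%nat /\ lin_equiv G (Gamma0 i)) /\
  (forall i j : nat, (i <= 5)%nat -> (j <= 5)%nat -> i <> j ->
     ~ lin_equiv (Gamma0 i) (Gamma0 j)).
Proof.
  split.
  - intros G HG.
    destruct (Req_dec (ldet G (trace_null G)) 0) as [Hdet | Hdet].
    + destruct (Req_dec (trace G (trace_vec G)) 0) as [Htr | Htr].
      * destruct (lin_equiv_Gamma0_or_Gamma4 G HG (trace_vec_eq0 G Htr));
          [exists 0%nat | exists 4%nat]; (split; [lia | assumption]).
      * destruct (lin_equiv_Gamma1_or_Gamma3 G HG Hdet Htr);
          [exists 1%nat | exists 3%nat]; (split; [lia | assumption]).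
    + destruct (lin_equiv_Gamma2_or_Gamma5 G HG Hdet);
        [exists 2%nat | exists 5%nat]; (split; [lia | assumption]).
  - intros i j Hi Hj Hij HT.
    destruct (Nat.lt_gt_cases i j) as [[Hlt | Hgt] _]; [exact Hij |..].
    + exact (Gamma0_inequiv_lt i j (conj Hlt Hj) HT).
    + exact (Gamma0_inequiv_lt j i (conj Hgt Hi) (lin_equiv_sym _ _ HT)).
Qed.
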